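(* Let $f:\mathbb{C}^2\to\mathbb{C}$ be a convenient mixed polynomial that is Newton non-degenerate. Then $f$ has an inner Newton non-degenerate boundary.
   Context: A mixed polynomial is $f=\sum c_{\nu,\mu}z^\nu\bar z^\mu$ with $z=(u,v)\in\mathbb{C}^2$, $z^\nu=u^{\nu_1}v^{\nu_2}$, $\bar z^\mu=\bar u^{\mu_1}\bar v^{\mu_2}$, regarded as a real map $\mathbb{R}^4\to\mathbb{R}^2$. $V_f=f^{-1}(0)$; $\Sigma_f$ (critical points) is the set where the real Jacobian has rank $<2$, equivalently the common zeros of $f_u\overline{f_{\bar v}}-\overline{f_{\bar u}}f_v$, $|f_u|^2-|f_{\bar u}|^2$, $|f_v|^2-|f_{\bar v}|^2$ (Wirtinger derivatives). $(\mathbb{C}^* )^2=(\mathbb{C}\setminus\{0\})^2$. Newton data: $\mathrm{supp}(f)=\{\nu+\mu:c_{\nu,\mu}\ne0\}$; $\Gamma_+(f)$ = convex hull of $\bigcup_{w\in\mathrm{supp}(f)}(w+\mathbb{R}^2_{\ge0})$, assumed to have at least one compact 1-face; $\Gamma(f)$ = lattice points on compact faces. $f$ is convenient if $\Gamma(f)$ meets both coordinate axes. For a compact face $\Delta$ (vertex or edge), $f_\Delta$ is the sum of terms with $\nu+\mu\in\Delta$. The compact 1-faces are $\Delta(P_1),\dots,\Delta(P_N)$, $P_i=(p_{i,1},p_{i,2})$ the primitive positive weight vector orthogonal to the edge, ordered so $p_{i,1}/p_{i,2}$ strictly decreases (so $\Delta(P_1)$ is the steepest edge); $f_{P_i}:=f_{\Delta(P_i)}$.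 A vertex is extreme if it lies on exactly one compact 1-face, non-extreme if on two. $f$ is Newton non-degenerate (Oka) if for every compact face $\Delta$ (vertices and edges), $V_{f_\Delta}\cap\Sigma_{f_\Delta}\cap(\mathbb{C}^* )^2=\emptyset$. $f$ has an inner Newton non-degenerate boundary if (i) $f_{P_1}$ has no critical points in $V_{f_{P_1}}\cap\{v\neq0\}$ and $f_{P_N}$ none in $V_{f_{P_N}}\cap\{u\ne0\}$; (ii) for each compact 1-face and non-extreme vertex $\Delta$, $f_\Delta$ has no critical points in $V_{f_\Delta}\cap(\mathbb{C}^* )^2$. *)

From HB Require Import structures.
From mathcomp Require Import all_boot all_order all_algebra.
From mathcomp Require Import reals realfun.
From mathcomp Require Import complex.
Set Implicit Arguments. Unset Strict Implicit. Unset Printing Implicit Defensive.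
Import Order.TTheory GRing.Theory Num.Theory.
Local Open Scope ring_scope.

(* A mixed polynomial in (u,v) and their conjugates, with complex coefficients
   C = R[i], R the real numbers (any realType).  It is given by a box bound
   [mdeg] and a coefficient function: the term
   [mcoef n1 n2 m1 m2 * u^n1 v^n2 conj(u)^m1 conj(v)^m2]
   is present for n1,n2,m1,m2 < mdeg (coefficients outside the box are
   ignored by every definition below). *)
Record mixpoly (R : realType) := MixPoly {
  mdeg : nat;
  mcoef : nat -> nat -> nat -> nat -> R[i] }.

Section MixedDefs.
Variable R : realType.
Implicit Types (f : mixpoly R) (u v : R[i]).

Definition meval f u v : R[i] :=
  \sum_(n1 < mdeg f) \sum_(n2 < mdeg f) \sum_(m1 < mdeg f) \sum_(m2 < mdeg f)
    mcoef f n1 n2 m1 m2 * u ^+ n1 * v ^+ n2 * (u^*)%C ^+ m1 * (v^*)%C ^+ m2.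

Definition dU f : mixpoly R := MixPoly (mdeg f) (fun n1 n2 m1 m2 =>
  if (n1.+1 < mdeg f)%N then mcoef f n1.+1 n2 m1 m2 *+ n1.+1 else 0).
Definition dUb f : mixpoly R := MixPoly (mdeg f) (fun n1 n2 m1 m2 =>
  if (m1.+1 < mdeg f)%N then mcoef f n1 n2 m1.+1 m2 *+ m1.+1 else 0).
Definition dV f : mixpoly R := MixPoly (mdeg f) (fun n1 n2 m1 m2 =>
  if (n2.+1 < mdeg f)%N then mcoef f n1 n2.+1 m1 m2 *+ n2.+1 else 0).
Definition dVb f : mixpoly R := MixPoly (mdeg f) (fun n1 n2 m1 m2 =>
  if (m2.+1 < mdeg f)%N then mcoef f n1 n2 m1 m2.+1 *+ m2.+1 else 0).

(* the real Jacobian of f : R^4 -> R^2, with real coordinates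
   u = x1 + i y1, v = x2 + i y2, columns d/dx1, d/dy1, d/dx2, d/dy2,
   rows Re f, Im f.  Via Wirtinger calculus:
   df/dx1 = f_u + f_ubar,  df/dy1 = i (f_u - f_ubar), and similarly for v. *)
Definition real_partials f u v : seq R[i] :=
  [:: meval (dU f) u v + meval (dUb f) u v;
      'i%C * (meval (dU f) u v - meval (dUb f) u v);
      meval (dV f) u v + meval (dVb f) u v;
      'i%C * (meval (dV f) u v - meval (dVb f) u v)].

Definition real_jacobian f u v : 'M[R]_(2, 4) :=
  \matrix_(i < 2, j < 4)
    (if i == ord0 then @complex.Re R (nth 0 (real_partials f u v) j)
     else @complex.Im R (nth 0 (real_partials f u v) j)).

Definition critical f u v : Prop := (\rank (real_jacobian f u v) < 2)%N.

Definition in_supp f (a b : nat) : bool :=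
  [exists n1 : 'I_(mdeg f), exists n2 : 'I_(mdeg f),
   exists m1 : 'I_(mdeg f), exists m2 : 'I_(mdeg f),
     [&& mcoef f n1 n2 m1 m2 != 0, (n1 + m1 == a)%N & (n2 + m2 == b)%N]].

Definition wdot (P : nat * nat) (a b : nat) : nat := (P.1 * a + P.2 * b)%N.

(* (a,b) is a point of supp(f) at which the weight P attains its minimum
   d(P) on supp(f) (supp(f) lies in the box [0, 2 mdeg)^2).  For a positive
   weight P the compact face Delta(P) of Gamma_+(f) is the convex hull of
   these points. *)
Definition on_face f (P : nat * nat) (a b : nat) : bool :=
  in_supp f a b &&
  [forall a' : 'I_(2 * mdeg f), forall b' : 'I_(2 * mdeg f),
     in_supp f a' b' ==> (wdot P a b <= wdot P a' b')%N].

Definition pos_weight (P : nat * nat) : Prop := (0 < P.1)%N /\ (0 < P.2)%N.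

Definition restrict f (K : nat -> nat -> bool) : mixpoly R :=
  MixPoly (mdeg f) (fun n1 n2 m1 m2 =>
    if K (n1 + m1)%N (n2 + m2)%N then mcoef f n1 n2 m1 m2 else 0).

Definition face_poly f (P : nat * nat) : mixpoly R := restrict f (on_face f P).

Definition vertex_poly f (w : nat * nat) : mixpoly R :=
  restrict f (fun a b => (a == w.1) && (b == w.2)).

(* P is the primitive positive weight vector of a compact 1-face (edge):
   its face contains two distinct points of supp(f) *)
Definition edge_weight f (P : nat * nat) : Prop :=
  pos_weight P /\ coprime P.1 P.2 /\
  exists a b a' b', on_face f P a b /\ on_face f P a' b' /\ (a, b) <> (a', b').

(* P = P_1 : the edge with maximal ratio p1/p2 (steepest edge) *)
Definition first_edge f (P : nat * nat) : Prop :=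
  edge_weight f P /\ forall Q, edge_weight f Q -> (Q.1 * P.2 <= P.1 * Q.2)%N.

(* P = P_N : the edge with minimal ratio p1/p2 *)
Definition last_edge f (P : nat * nat) : Prop :=
  edge_weight f P /\ forall Q, edge_weight f Q -> (P.1 * Q.2 <= Q.1 * P.2)%N.

Definition nonextreme_vertex f (w : nat * nat) : Prop :=
  exists P Q, edge_weight f P /\ edge_weight f Q /\ P <> Q /\
    on_face f P w.1 w.2 /\ on_face f Q w.1 w.2.

(* (a,b) is a lattice point of Gamma(f): it lies on a compact face
   Delta(P) = conv{points of supp f on the face} (collinear points, so a
   point of the hull lies on a segment between two of them) *)
Definition in_Gamma f (a b : nat) : Prop :=
  exists P, pos_weight P /\
    exists s1 s2 t1 t2 (t : R), on_face f P s1 s2 /\ on_face f P t1 t2 /\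
      0 <= t <= 1 /\
      a%:R = t * s1%:R + (1 - t) * t1%:R /\
      b%:R = t * s2%:R + (1 - t) * t2%:R.

Definition has_compact_edge f : Prop := exists P, edge_weight f P.

Definition convenient f : Prop :=
  (exists a, in_Gamma f a 0) /\ (exists b, in_Gamma f 0 b).

Definition no_crit_zero (g : mixpoly R) (S : R[i] -> R[i] -> Prop) : Prop :=
  forall u v, S u v -> meval g u v = 0 -> ~ critical g u v.

Definition torus u v : Prop := u != 0 /\ v != 0.

(* Newton non-degenerate (Oka): for every compact face Delta (= Delta(P),
   P a positive weight; vertices and edges), f_Delta has no critical point
   in V_{f_Delta} cap (C^* )^2 *)
Definition newton_nondegenerate f : Prop :=
  forall P, pos_weight P -> no_crit_zero (face_poly f P) torus.

Definition inner_nondegenerate_boundary f : Prop :=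
  (forall P, first_edge f P -> no_crit_zero (face_poly f P) (fun u v => v != 0)) /\
  (forall P, last_edge f P -> no_crit_zero (face_poly f P) (fun u v => u != 0)) /\
  (forall P, edge_weight f P -> no_crit_zero (face_poly f P) torus) /\
  (forall w, nonextreme_vertex f w -> no_crit_zero (vertex_poly f w) torus).

End MixedDefs.

From Pilot Require Import Defs.
From mathcomp Require Import all_boot all_order all_algebra.
From mathcomp Require Import reals realfun.
From mathcomp Require Import complex.
From mathcomp Require Import zify.
Set Implicit Arguments. Unset Strict Implicit. Unset Printing Implicit Defensive.
Import Order.TTheory GRing.Theory Num.Theory.

(* A Newton non-degenerate f already controls every f_Delta on the torus, so
   only the points of the extreme edge faces on a coordinate axis need care.
   At a point (0, v) the terms of f_P containing u or conj u vanish together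
   with their contribution to the Jacobian, so (0, v) is a critical zero of f_P
   only if (1, v) is a critical zero of the part of f_P supported on the axis
   {a = 0}.  Convenience forces the steepest edge Delta(P_1) to reach that axis
   at a vertex (0, b0), so this part is the vertex polynomial of (0, b0), which
   is the face polynomial of the weight P_1 + (1, 0) and hence has no critical
   zero on the torus.  The flattest edge is symmetric, and a non-extreme vertex
   on the edges Delta(P), Delta(Q) is the face of the weight P + Q. *)

Lemma exists_coprime_ratio n m : 0 < n -> 0 < m ->
  exists n' m', [/\ 0 < n', 0 < m', coprime n' m' & n' * m = n * m'].
Proof.
move=> n0 m0; set g := gcdn n m.
have g0 : 0 < g by rewrite gcdn_gt0 n0.
have hn : n %/ g * g = n by rewrite divnK // dvdn_gcdl.
have hm : m %/ g * g = m by rewrite divnK // dvdn_gcdr.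
exists (n %/ g), (m %/ g); split.
- by move: n0; rewrite -{1}hn muln_gt0 => /andP[].
- by move: m0; rewrite -{1}hm muln_gt0 => /andP[].
- have : gcdn (n %/ g) (m %/ g) * g = 1 * g by rewrite muln_gcdl hn hm mul1n.
  by move/eqP; rewrite eqn_pmul2r.
- by rewrite mulnC -muln_divCA_gcd.
Qed.

Lemma coprime_weights_eq (P Q : nat * nat) a b a' b' :
  pos_weight P -> pos_weight Q -> coprime P.1 P.2 -> coprime Q.1 Q.2 ->
  wdot P a b = wdot P a' b' -> wdot Q a b = wdot Q a' b' -> (a, b) <> (a', b') ->
  P = Q.
Proof.
case: P Q => p1 p2 [q1 q2] [/= p10 p20] [/= q10 q20] /= cp cq.
wlog lt_aa' : a b a' b' / a < a'.
  move=> hwlog EP EQ neq; case: (ltngtP a a') => ha.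
  - exact: hwlog EP EQ neq.
  - by apply: (hwlog a' b' a b) => // -[ea eb]; apply: neq; rewrite ea eb.
  - subst a'; exfalso; apply: neq; congr pair; apply/eqP.
    by rewrite -(eqn_pmul2l p20); apply/eqP; move: EP; rewrite /wdot /=; lia.
have [e ->] : exists e, a' = a + e.+1 by exists (a' - a).-1; lia.
rewrite /wdot /= => EP EQ _.
have le_b'b : b' <= b by rewrite -(leq_pmul2l p20); lia.
have [d eb] : exists d, b = b' + d by exists (b - b'); lia.
subst b.
have hp : p1 * e.+1 = p2 * d by nia.
have hq : q1 * e.+1 = q2 * d by nia.
have cross : p1 * q2 = q1 * p2.
  apply/eqP; rewrite -(eqn_pmul2r (ltn0Sn e)); apply/eqP.
  by rewrite [LHS]mulnAC hp [RHS]mulnAC hq; nia.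
have p1q1 : p1 %| q1 by rewrite -(Gauss_dvdr _ cp) mulnC -cross dvdn_mulr.
have q1p1 : q1 %| p1 by rewrite -(Gauss_dvdr _ cq) mulnC cross dvdn_mulr.
have e1 : p1 = q1 by apply/eqP; rewrite eqn_dvd p1q1 q1p1.
by subst q1; congr pair; apply/eqP; rewrite -(eqn_pmul2l p10) cross.
Qed.

Lemma wdotD (P Q : nat * nat) a b :
  wdot (P.1 + Q.1, P.2 + Q.2) a b = wdot P a b + wdot Q a b.
Proof. by rewrite /wdot /= !mulnDl addnACA. Qed.

Section FacesOfSupport.
Variable S : nat -> nat -> bool.

Definition on_faceS (P : nat * nat) a b :=
  S a b /\ forall a' b', S a' b' -> wdot P a b <= wdot P a' b'.

Definition edge_weightS (P : nat * nat) := pos_weight P /\ coprime P.1 P.2 /\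
  exists a b a' b', on_faceS P a b /\ on_faceS P a' b' /\ (a, b) <> (a', b').

Lemma on_faceS_add P Q a0 b0 a b : on_faceS P a0 b0 -> on_faceS Q a0 b0 ->
  on_faceS (P.1 + Q.1, P.2 + Q.2) a b <-> on_faceS P a b /\ on_faceS Q a b.
Proof.
move=> [S0 hP] [_ hQ]; split.
- move=> [Sab hPQ]; have := hPQ _ _ S0; rewrite !wdotD => hab.
  have hPab := hP _ _ Sab; have hQab := hQ _ _ Sab.
  split; split=> // a' b' S'.
  + by apply: leq_trans (hP _ _ S'); lia.
  + by apply: leq_trans (hQ _ _ S'); lia.
- move=> [[Sab hPab] [_ hQab]]; split=> // a' b' S'.
  by rewrite !wdotD leq_add ?hPab ?hQab.
Qed.

Lemma on_faceS_wdot P a b a' b' :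
  on_faceS P a b -> on_faceS P a' b' -> wdot P a b = wdot P a' b'.
Proof. by move=> [S1 h1] [S2 h2]; apply/eqP; rewrite eqn_leq h1 // h2. Qed.

Lemma edge_weightS_meet P Q a b a' b' : edge_weightS P -> edge_weightS Q ->
  on_faceS P a b -> on_faceS Q a b -> on_faceS P a' b' -> on_faceS Q a' b' ->
  (a, b) <> (a', b') -> P = Q.
Proof.
move=> [pP [cP _]] [pQ [cQ _]] Pab Qab Pab' Qab'.
exact: coprime_weights_eq pP pQ cP cQ (on_faceS_wdot Pab Pab') (on_faceS_wdot Qab Qab').
Qed.

Lemma on_faceS_proportional P Q a b : pos_weight P -> pos_weight Q ->
  Q.1 * P.2 = P.1 * Q.2 -> on_faceS P a b -> on_faceS Q a b.
Proof.
case: P Q => p1 p2 [q1 q2] [/= p10 _] [/= q10 _] /= hPQ [Sab h]; split=> // a' b' S'.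
have scale x y : p1 * wdot (q1, q2) x y = q1 * wdot (p1, p2) x y.
  by rewrite /wdot /= !mulnDr mulnCA [p1 * (q2 * _)]mulnA -hPQ; lia.
by rewrite -(leq_pmul2l p10) !scale leq_mul2l h ?orbT.
Qed.

Lemma edge_weightS_of_face_pair W a b a' b' : pos_weight W ->
  on_faceS W a b -> on_faceS W a' b' -> (a, b) <> (a', b') ->
  exists2 Q, edge_weightS Q & Q.1 * W.2 = W.1 * Q.2.
Proof.
move=> [W1 W2] hab hab' neq.
have [n [m [n0 m0 cop hnm]]] := exists_coprime_ratio W1 W2.
have pQ : pos_weight (n, m) by [].
have toQ := on_faceS_proportional (conj W1 W2) pQ hnm.
exists (n, m) => //; split=> //; split=> //.
by exists a, b, a', b'; split; [|split] => //; apply: toQ.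
Qed.

Lemma max_slope_face b0 ya yb :
  S 0 b0 -> (forall b, S 0 b -> b0 <= b) -> S ya yb -> yb < b0 ->
  (forall a b, S a b -> 0 < a -> b < b0 -> (b0 - b) * ya <= (b0 - yb) * a) ->
  on_faceS (b0 - yb, ya) 0 b0 /\ on_faceS (b0 - yb, ya) ya yb.
Proof.
move=> S0 minb0 Sy lt_yb slope.
have on_line : wdot (b0 - yb, ya) ya yb = wdot (b0 - yb, ya) 0 b0.
  by rewrite /wdot /=; nia.
suff above a b : S a b -> wdot (b0 - yb, ya) 0 b0 <= wdot (b0 - yb, ya) a b.
  by split; split=> // a b /above; rewrite ?on_line.
move=> Sab; rewrite /wdot /=.
case: (leqP b0 b) => [le_b0b|lt_bb0]; first by nia.
case: a Sab => [|a] Sab; first by have := minb0 _ Sab; lia.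
by have := slope _ _ Sab isT lt_bb0; nia.
Qed.

Lemma on_faceS_two_edges P Q a0 b0 a b :
  edge_weightS P -> edge_weightS Q -> P <> Q -> on_faceS P a0 b0 -> on_faceS Q a0 b0 ->
  on_faceS (P.1 + Q.1, P.2 + Q.2) a b <-> (a, b) = (a0, b0).
Proof.
move=> eP eQ neq P0 Q0; rewrite (on_faceS_add _ _ P0 Q0).
split=> [[Pab Qab]|[-> ->]]; last exact: conj P0 Q0.
apply/eqP/negPn/negP => /eqP ne.
exact: neq (edge_weightS_meet eP eQ Pab Qab P0 Q0 ne).
Qed.

Lemma on_faceS_tilt_u P b0 a b : pos_weight P -> on_faceS P 0 b0 ->
  on_faceS (P.1 + 1, P.2 + 0) a b <-> (a, b) = (0, b0).
Proof.
case: P => p1 p2 [_ /= p20] P0.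
have U0 : on_faceS (1, 0) 0 b0 by split=> [|a' b' _]; [case: P0 | rewrite /wdot /=].
rewrite (on_faceS_add _ _ P0 U0).
split=> [[[Sab hab] [_ h0]]|[-> ->]]; last exact: conj P0 U0.
have a0 : a = 0 by have := h0 _ _ P0.1; rewrite /wdot /=; lia.
subst a; congr pair; apply/eqP; rewrite -(eqn_pmul2l p20).
by have := hab _ _ P0.1; have := P0.2 _ _ Sab; rewrite /wdot /= => *; apply/eqP; lia.
Qed.

Lemma on_faceS_axis_u P b0 b :
  0 < P.2 -> on_faceS P 0 b0 -> on_faceS P 0 b -> b = b0.
Proof.
case: P => p1 p2 /= p20 P0 Pb; apply/eqP; rewrite -(eqn_pmul2l p20).
by apply/eqP; have := on_faceS_wdot P0 Pb; rewrite /wdot /=; lia.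
Qed.

Variable B : nat.
Hypothesis S_bounded : forall a b, S a b -> a < B /\ b < B.

Lemma exists_max_slope b0 a b : S a b -> 0 < a -> b < b0 ->
  exists ya yb, [/\ S ya yb, 0 < ya, yb < b0 &
    forall a' b', S a' b' -> 0 < a' -> b' < b0 -> (b0 - b') * ya <= (b0 - yb) * a'].
Proof.
move=> Sab a0 lt_bb0; have [aB bB] := S_bounded Sab.
pose cand (i : 'I_B * 'I_B) := [&& S i.1 i.2, 0 < i.1 & i.2 < b0].
pose slope (i : 'I_B * 'I_B) : rat := ((b0 - i.2)%N%:R / (i.1)%:R)%R.
have cand0 : cand (Ordinal aB, Ordinal bB) by rewrite /cand /= Sab a0.
case: (arg_maxP slope cand0) => -[ya yb] /and3P[Sy ya0 lt_yb] ymax.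
exists ya, yb; split=> // a' b' S' a'0 lt_b'b0.
have [a'B b'B] := S_bounded S'.
have := ymax (Ordinal a'B, Ordinal b'B); rewrite /cand /= S' a'0 lt_b'b0 => /(_ isT).
rewrite /slope /= ler_pdivrMr ?ltr0n // mulrAC ler_pdivlMr ?ltr0n //.
by rewrite -!natrM ler_nat.
Qed.

Lemma steepest_edge_meets_axis P : edge_weightS P ->
  (forall Q, edge_weightS Q -> Q.1 * P.2 <= P.1 * Q.2) ->
  (exists b, S 0 b) -> exists b0, on_faceS P 0 b0.
Proof.
(* If the lowest axis point (0, b0) lay strictly above the supporting line of
   the face, the points of S below it would contain one of maximal slope seen
   from (0, b0); the segment joining the two is an edge steeper than P. *)
case: P => p1 p2 [[/= p10 p20] [_ [xa [xb [_ [_ [[Sx facex] _]]]]]]] steepest hex.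
case: (ex_minnP hex) => b0 S0 minb0; exists b0; split=> //.
suff le_0x : wdot (p1, p2) 0 b0 <= wdot (p1, p2) xa xb.
  by move=> a' b' S'; apply: leq_trans le_0x (facex _ _ S').
rewrite leqNgt; apply/negP; rewrite /wdot /= => below.
have xa0 : 0 < xa.
  case: xa Sx facex below => [|xa] // Sx _.
  by rewrite !muln0 !add0n ltn_pmul2l // ltnNge minb0.
have lt_xb : xb < b0 by rewrite -(ltn_pmul2l p20); lia.
have [ya [yb [Sy ya0 lt_yb slope]]] := exists_max_slope Sx xa0 lt_xb.
have [face0 facey] := max_slope_face S0 minb0 Sy lt_yb slope.
have [Q eQ hQ] : exists2 Q, edge_weightS Q & Q.1 * ya = (b0 - yb) * Q.2.
  apply: edge_weightS_of_face_pair face0 facey _; first by split=> /=; lia.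
  by case=> ya_eq; rewrite -ya_eq in ya0.
have := steepest _ eQ; have := slope _ _ Sx xa0 lt_xb; case: eQ => -[q10 q20] _ /=.
by nia.
Qed.

End FacesOfSupport.

Lemma on_faceS_swap (S : nat -> nat -> bool) (P : nat * nat) a b :
  on_faceS (fun x y => S y x) (P.2, P.1) a b <-> on_faceS S P b a.
Proof.
rewrite /on_faceS /wdot /=; split=> -[Sab h]; split=> // a' b' S'.
all: by have := h b' a' S'; lia.
Qed.

Lemma edge_weightS_swap (S : nat -> nat -> bool) P :
  edge_weightS S P -> edge_weightS (fun x y => S y x) (P.2, P.1).
Proof.
case: P => p1 p2 [[/= p10 p20] [cP [a [b [a' [b' [Pab [Pab' ne]]]]]]]].
split=> //; split; first by rewrite /= coprime_sym.
exists b, a, b', a'; rewrite !(on_faceS_swap S (p1, p2)).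
by split=> //; split=> // -[eb ea]; apply: ne; rewrite eb ea.
Qed.

Lemma on_faceS_tilt_v (S : nat -> nat -> bool) P a0 a b :
  pos_weight P -> on_faceS S P a0 0 ->
  on_faceS S (P.1 + 0, P.2 + 1) a b <-> (a, b) = (a0, 0).
Proof.
case: P => p1 p2 [/= p10 p20] P0.
have P0' : on_faceS (fun x y => S y x) (p2, p1) 0 a0 by apply/on_faceS_swap.
rewrite -[on_faceS S _ a b]on_faceS_swap /=.
rewrite (on_faceS_tilt_u (P := (p2, p1)) b a (conj p20 p10) P0').
by split=> -[-> ->].
Qed.

Lemma on_faceS_axis_v (S : nat -> nat -> bool) (P : nat * nat) a0 a :
  0 < P.1 -> on_faceS S P a0 0 -> on_faceS S P a 0 -> a = a0.
Proof.
case: P => p1 p2 p10; rewrite -!(on_faceS_swap S (p1, p2)).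
exact: on_faceS_axis_u.
Qed.

Lemma flattest_edge_meets_axis (S : nat -> nat -> bool) B (P : nat * nat) :
  (forall a b, S a b -> a < B /\ b < B) -> edge_weightS S P ->
  (forall Q, edge_weightS S Q -> P.1 * Q.2 <= Q.1 * P.2) -> (exists a, S a 0) -> exists a0, on_faceS S P a0 0.
Proof.
move=> bounded eP flattest [a Sa].
have bounded' x y : S y x -> x < B /\ y < B by move=> /bounded[].
have steepest' Q : edge_weightS (fun x y => S y x) Q -> Q.1 * P.1 <= P.2 * Q.2.
  by case: Q => q1 q2 /edge_weightS_swap /flattest /=; lia.
have [a0 P0] := steepest_edge_meets_axis bounded' (edge_weightS_swap eP) steepest'
  (ex_intro _ a Sa).
by exists a0; rewrite -on_faceS_swap.
Qed.

Section MixedPolynomials.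
Variable R : realType.
Implicit Types (f g h : mixpoly R).
Local Open Scope ring_scope.

(* Every notion attached to a mixed polynomial reads only the coefficients
   inside its box [0, mdeg)^4, so this is the equality that matters. *)
Definition same_terms f g := mdeg f = mdeg g /\ forall n1 n2 m1 m2,
  (n1 < mdeg f)%N -> (n2 < mdeg f)%N -> (m1 < mdeg f)%N -> (m2 < mdeg f)%N ->
  mcoef f n1 n2 m1 m2 = mcoef g n1 n2 m1 m2.

Lemma same_terms_trans f g h : same_terms f g -> same_terms g h -> same_terms f h.
Proof.
move=> [e1 h1] [e2 h2]; split; first by rewrite e1.
by move=> *; rewrite h1 // h2 // -e1.
Qed.

Lemma meval_same f g u v : same_terms f g -> meval f u v = meval g u v.
Proof.
case: f g => d c [d' c'] [/= <- hc]; rewrite /meval /=.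
apply: eq_bigr => i _; apply: eq_bigr => j _; apply: eq_bigr => k _.
by apply: eq_bigr => l _; rewrite hc.
Qed.

Lemma same_terms_wirtinger f g : same_terms f g ->
  [/\ same_terms (dU f) (dU g), same_terms (dUb f) (dUb g),
      same_terms (dV f) (dV g) & same_terms (dVb f) (dVb g)].
Proof.
by move=> [e hc]; split; split=> //= *; rewrite -e; case: ifP => // ?; rewrite hc.
Qed.

Lemma real_jacobian_same f g u v :
  same_terms f g -> real_jacobian f u v = real_jacobian g u v.
Proof.
move=> /same_terms_wirtinger[eU eUb eV eVb].
by rewrite /real_jacobian /real_partials !(meval_same _ _ eU, meval_same _ _ eUb,
  meval_same _ _ eV, meval_same _ _ eVb).
Qed.

Lemma no_crit_zero_same f g S : same_terms f g -> no_crit_zero g S -> no_crit_zero f S.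
Proof.
move=> e hg u v Suv; rewrite (meval_same _ _ e) /critical (real_jacobian_same _ _ e).
exact: hg.
Qed.

Lemma in_supp_coef f n1 n2 m1 m2 :
  (n1 < mdeg f)%N -> (n2 < mdeg f)%N -> (m1 < mdeg f)%N -> (m2 < mdeg f)%N ->
  mcoef f n1 n2 m1 m2 != 0 -> in_supp f (n1 + m1) (n2 + m2).
Proof.
move=> h1 h2 h3 h4 nz; apply/existsP; exists (Ordinal h1); apply/existsP.
exists (Ordinal h2); apply/existsP; exists (Ordinal h3); apply/existsP.
by exists (Ordinal h4); rewrite /= nz !eqxx.
Qed.

Lemma restrict_same f (K K' : nat -> nat -> bool) :
  (forall a b, in_supp f a b -> K a b = K' a b) ->
  same_terms (Defs.restrict f K) (Defs.restrict f K').
Proof.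
move=> hK; split=> //= n1 n2 m1 m2 h1 h2 h3 h4.
have [->|nz] := eqVneq (mcoef f n1 n2 m1 m2) 0; first by rewrite !if_same.
by rewrite hK //; apply: in_supp_coef.
Qed.

Lemma restrict_restrict f (K1 K2 : nat -> nat -> bool) :
  same_terms (Defs.restrict (Defs.restrict f K1) K2)
             (Defs.restrict f (fun a b => K1 a b && K2 a b)).
Proof. by split=> //= *; case: (K1 _ _); case: (K2 _ _). Qed.

Definition axis_u (a b : nat) := a == 0%N.
Definition axis_v (a b : nat) := b == 0%N.

Lemma meval_u0 g v : meval g 0 v = meval (Defs.restrict g axis_u) 1 v.
Proof.
rewrite /meval; apply: eq_bigr => i _; apply: eq_bigr => j _; apply: eq_bigr => k _.
apply: eq_bigr => l _; rewrite conjc0 conjc1 !expr1n !mulr1 /axis_u.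
by case: i => [[|i] ?]; case: k => [[|k] ?] /=;
  rewrite ?addSn ?addnS ?expr0 ?expr0n ?mulr1 ?mulr0 ?mul0r.
Qed.

Lemma meval_v0 g u : meval g u 0 = meval (Defs.restrict g axis_v) u 1.
Proof.
rewrite /meval; apply: eq_bigr => i _; apply: eq_bigr => j _; apply: eq_bigr => k _.
apply: eq_bigr => l _; rewrite conjc0 conjc1 !expr1n !mulr1 /axis_v.
by case: j => [[|j] ?]; case: l => [[|l] ?] /=;
  rewrite ?addSn ?addnS ?expr0 ?expr0n ?mulr1 ?mulr0 ?mul0r.
Qed.

Lemma meval_eq0 g u v :
  (forall n1 n2 m1 m2, mcoef g n1 n2 m1 m2 = 0) -> meval g u v = 0.
Proof.
move=> g0; rewrite /meval big1 // => i _; rewrite big1 // => j _.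
by rewrite big1 // => k _; rewrite big1 // => l _; rewrite g0 !mul0r.
Qed.

Lemma wirtinger_restrict_axis_u g :
  [/\ forall n1 n2 m1 m2, mcoef (dU (Defs.restrict g axis_u)) n1 n2 m1 m2 = 0,
      forall n1 n2 m1 m2, mcoef (dUb (Defs.restrict g axis_u)) n1 n2 m1 m2 = 0,
      same_terms (dV (Defs.restrict g axis_u)) (Defs.restrict (dV g) axis_u) &
      same_terms (dVb (Defs.restrict g axis_u)) (Defs.restrict (dVb g) axis_u)].
Proof.
rewrite /axis_u; split=> [n1 n2 m1 m2|n1 n2 m1 m2||] /=.
- by case: ifP => // _; rewrite ?addSn ?addnS mul0rn.
- by case: ifP => // _; rewrite ?addSn ?addnS mul0rn.
- by split=> //= *; case: ifP; case: ifP; rewrite ?mul0rn.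
- by split=> //= *; case: ifP; case: ifP; rewrite ?mul0rn.
Qed.

Lemma wirtinger_restrict_axis_v g :
  [/\ forall n1 n2 m1 m2, mcoef (dV (Defs.restrict g axis_v)) n1 n2 m1 m2 = 0,
      forall n1 n2 m1 m2, mcoef (dVb (Defs.restrict g axis_v)) n1 n2 m1 m2 = 0,
      same_terms (dU (Defs.restrict g axis_v)) (Defs.restrict (dU g) axis_v) &
      same_terms (dUb (Defs.restrict g axis_v)) (Defs.restrict (dUb g) axis_v)].
Proof.
rewrite /axis_v; split=> [n1 n2 m1 m2|n1 n2 m1 m2||] /=.
- by case: ifP => // _; rewrite ?addSn ?addnS mul0rn.
- by case: ifP => // _; rewrite ?addSn ?addnS mul0rn.
- by split=> //= *; case: ifP; case: ifP; rewrite ?mul0rn.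
- by split=> //= *; case: ifP; case: ifP; rewrite ?mul0rn.
Qed.

Lemma real_jacobian_u0 g v :
  real_jacobian (Defs.restrict g axis_u) 1 v =
  real_jacobian g 0 v *m diag_mx (\row_(j < 4) if (2 <= j)%N then 1 else 0).
Proof.
have [dU0 dUb0 eV eVb] := wirtinger_restrict_axis_u g.
apply/matrixP => i j; rewrite mul_mx_diag [LHS]mxE [in RHS]mxE /real_jacobian mxE.
rewrite [X in _ * X]mxE /real_partials.
rewrite (meval_eq0 _ _ dU0) (meval_eq0 _ _ dUb0).
rewrite (meval_same _ _ eV) (meval_same _ _ eVb) -!meval_u0.
case: j => [[|[|[|[|j]]]] hj]; simpl nth;
  rewrite ?mulr0 ?mulr1 ?addr0 ?subr0 ?mulr0 //; by case: (i == ord0).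
Qed.

Lemma real_jacobian_v0 g u :
  real_jacobian (Defs.restrict g axis_v) u 1 =
  real_jacobian g u 0 *m diag_mx (\row_(j < 4) if (j < 2)%N then 1 else 0).
Proof.
have [dV0 dVb0 eU eUb] := wirtinger_restrict_axis_v g.
apply/matrixP => i j; rewrite mul_mx_diag [LHS]mxE [in RHS]mxE /real_jacobian mxE.
rewrite [X in _ * X]mxE /real_partials.
rewrite (meval_eq0 _ _ dV0) (meval_eq0 _ _ dVb0).
rewrite (meval_same _ _ eU) (meval_same _ _ eUb) -!meval_v0.
case: j => [[|[|[|[|j]]]] hj]; simpl nth;
  rewrite ?mulr0 ?mulr1 ?addr0 ?subr0 ?mulr0 //; by case: (i == ord0).
Qed.

Lemma no_crit_zero_u0 g : no_crit_zero (Defs.restrict g axis_u) (@torus R) ->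
  no_crit_zero g (fun u v => (u == 0) && (v != 0)).
Proof.
move=> hg u v /andP[/eqP-> vnz]; rewrite meval_u0 => g0 crit.
apply: (hg 1 v (conj (oner_neq0 _) vnz) g0).
by rewrite /critical real_jacobian_u0 (leq_ltn_trans (mxrankM_maxl _ _)).
Qed.

Lemma no_crit_zero_v0 g : no_crit_zero (Defs.restrict g axis_v) (@torus R) ->
  no_crit_zero g (fun u v => (u != 0) && (v == 0)).
Proof.
move=> hg u v /andP[unz /eqP->]; rewrite meval_v0 => g0 crit.
apply: (hg u 1 (conj unz (oner_neq0 _)) g0).
by rewrite /critical real_jacobian_v0 (leq_ltn_trans (mxrankM_maxl _ _)).
Qed.

End MixedPolynomials.

Section NewtonBoundary.
Variable R : realType.
Implicit Types f : mixpoly R.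
Local Open Scope ring_scope.

Lemma in_supp_bound f a b : in_supp f a b -> (a < 2 * mdeg f)%N /\ (b < 2 * mdeg f)%N.
Proof.
case/existsP => n1 /existsP[n2 /existsP[m1 /existsP[m2 /and3P[_ /eqP<- /eqP<-]]]].
by have := ltn_ord n1; have := ltn_ord n2; have := ltn_ord m1; have := ltn_ord m2; lia.
Qed.

Lemma on_faceE f P a b : on_face f P a b <-> on_faceS (in_supp f) P a b.
Proof.
split=> [/andP[Sab /forallP h]|[Sab h]].
  split=> // a' b' S'; have [a'B b'B] := in_supp_bound S'.
  exact: implyP (forallP (h (Ordinal a'B)) (Ordinal b'B)) S'.
by rewrite /on_face Sab; apply/forallP => a'; apply/forallP => b'; apply/implyP => /h.
Qed.

Lemma edge_weightE f P : edge_weight f P <-> edge_weightS (in_supp f) P.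
Proof.
by split=> -[pP [cP [a [b [a' [b' [h1 [h2 ne]]]]]]]]; split=> //; split=> //;
  exists a, b, a', b'; rewrite !on_faceE in h1 h2 *.
Qed.

Lemma vertex_poly_no_crit f Q w : newton_nondegenerate f -> pos_weight Q ->
  (forall a b, on_faceS (in_supp f) Q a b <-> (a, b) = w) ->
  no_crit_zero (vertex_poly f w) (@torus R).
Proof.
case: w => w1 w2 nd pQ faceQ; apply: no_crit_zero_same (nd Q pQ).
apply: restrict_same => a b _ /=; apply/idP/idP.
  by case/andP => /eqP-> /eqP->; apply/on_faceE/faceQ.
by move/on_faceE/faceQ => -[-> ->]; rewrite !eqxx.
Qed.

Lemma face_poly_axis_u f P b0 : pos_weight P -> on_faceS (in_supp f) P 0 b0 ->
  same_terms (Defs.restrict (face_poly f P) axis_u) (vertex_poly f (0%N, b0)).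
Proof.
move=> [_ p20] P0; apply: same_terms_trans (restrict_restrict _ _ _) _.
apply: restrict_same => a b Sab /=; rewrite /axis_u andbC.
have [-> /=|] := eqVneq a 0%N; last by [].
apply/idP/eqP => [/on_faceE/(on_faceS_axis_u p20 P0)//|->]; exact/on_faceE.
Qed.

Lemma face_poly_axis_v f P a0 : pos_weight P -> on_faceS (in_supp f) P a0 0 ->
  same_terms (Defs.restrict (face_poly f P) axis_v) (vertex_poly f (a0, 0%N)).
Proof.
move=> [p10 _] P0; apply: same_terms_trans (restrict_restrict _ _ _) _.
apply: restrict_same => a b Sab /=; rewrite /axis_v andbC.
have [-> /=|] := eqVneq b 0%N; last by rewrite andbF.
rewrite andbT; apply/idP/eqP => [/on_faceE/(on_faceS_axis_v p10 P0)//|->].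
exact/on_faceE.
Qed.

Lemma face_poly_no_crit_u0 f P b0 : newton_nondegenerate f -> pos_weight P ->
  on_faceS (in_supp f) P 0 b0 ->
  no_crit_zero (face_poly f P) (fun u v => (u == 0) && (v != 0)).
Proof.
move=> nd pP P0; apply/no_crit_zero_u0/(no_crit_zero_same (face_poly_axis_u pP P0)).
apply: vertex_poly_no_crit nd _ (fun a b => on_faceS_tilt_u a b pP P0).
by case: pP => p10 p20; split; rewrite /= ?addn_gt0 ?p10 ?p20.
Qed.

Lemma face_poly_no_crit_v0 f P a0 : newton_nondegenerate f -> pos_weight P ->
  on_faceS (in_supp f) P a0 0 ->
  no_crit_zero (face_poly f P) (fun u v => (u != 0) && (v == 0)).
Proof.
move=> nd pP P0; apply/no_crit_zero_v0/(no_crit_zero_same (face_poly_axis_v pP P0)).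
apply: vertex_poly_no_crit nd _ (fun a b => on_faceS_tilt_v a b pP P0).
by case: pP => p10 p20; split; rewrite /= ?addn_gt0 ?p10 ?p20.
Qed.

Lemma first_edge_no_crit f P : newton_nondegenerate f -> (exists b, in_supp f 0 b) ->
  first_edge f P -> no_crit_zero (face_poly f P) (fun u v => v != 0).
Proof.
move=> nd axis [eP steepest] u v vnz.
case: (eqVneq u 0) => [u0|unz]; last exact: nd P eP.1 u v (conj unz vnz).
have [b0 P0] := steepest_edge_meets_axis (@in_supp_bound f)
  (proj1 (edge_weightE f P) eP) (fun Q eQ => steepest Q (proj2 (edge_weightE f Q) eQ)) axis.
by apply: (face_poly_no_crit_u0 nd eP.1 P0); rewrite u0 eqxx vnz.
Qed.

Lemma last_edge_no_crit f P : newton_nondegenerate f -> (exists a, in_supp f a 0) ->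
  last_edge f P -> no_crit_zero (face_poly f P) (fun u v => u != 0).
Proof.
move=> nd axis [eP flattest] u v unz.
case: (eqVneq v 0) => [v0|vnz]; last exact: nd P eP.1 u v (conj unz vnz).
have [a0 P0] := flattest_edge_meets_axis (@in_supp_bound f)
  (proj1 (edge_weightE f P) eP) (fun Q eQ => flattest Q (proj2 (edge_weightE f Q) eQ)) axis.
by apply: (face_poly_no_crit_v0 nd eP.1 P0); rewrite v0 eqxx unz.
Qed.

Lemma nonextreme_vertex_no_crit f w : newton_nondegenerate f ->
  nonextreme_vertex f w -> no_crit_zero (vertex_poly f w) (@torus R).
Proof.
case: w => w1 w2 nd [P [Q [eP [eQ [neq [Pw Qw]]]]]].
apply: vertex_poly_no_crit nd _ (fun a b => on_faceS_two_edges a b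
  (proj1 (edge_weightE f P) eP) (proj1 (edge_weightE f Q) eQ) neq
  (proj1 (on_faceE f P w1 w2) Pw) (proj1 (on_faceE f Q w1 w2) Qw)).
by case: eP.1 => p10 p20; split; rewrite /= addn_gt0 ?p10 ?p20.
Qed.

Lemma convex_comb_nat_eq0 (s t : nat) (c : R) : 0 <= c <= 1 ->
  0 = c * s%:R + (1 - c) * t%:R -> s = 0%N \/ t = 0%N.
Proof.
move=> /andP[c0 c1] /esym/eqP; rewrite paddr_eq0 ?mulr_ge0 ?subr_ge0 //.
rewrite !mulf_eq0 !pnatr_eq0 subr_eq0.
case/andP => /orP[/eqP c_eq0|/eqP ->] /orP[/eqP c_eq1|/eqP ->]; auto.
by move: c_eq1; rewrite c_eq0 => /eqP; rewrite oner_eq0.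
Qed.

Lemma in_Gamma_u_axis f b : in_Gamma f 0 b -> exists b', in_supp f 0 b'.
Proof.
case=> P [_ [s1 [s2 [t1 [t2 [t [Ps [Pt [ht [ea _]]]]]]]]]].
by case: (convex_comb_nat_eq0 ht ea) => e; subst;
  [exists s2; case/andP: Ps | exists t2; case/andP: Pt].
Qed.

Lemma in_Gamma_v_axis f a : in_Gamma f a 0 -> exists a', in_supp f a' 0.
Proof.
case=> P [_ [s1 [s2 [t1 [t2 [t [Ps [Pt [ht [_ eb]]]]]]]]]].
by case: (convex_comb_nat_eq0 ht eb) => e; subst;
  [exists s1; case/andP: Ps | exists t1; case/andP: Pt].
Qed.

End NewtonBoundary.

Theorem mainTheorem4 (R : realType) (f : mixpoly R) :
  has_compact_edge f -> convenient f -> newton_nondegenerate f ->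
  inner_nondegenerate_boundary f.
Proof.
(* A compact edge need not be assumed: conditions (i) and (ii) quantify over edges. *)
move=> _ [[a Ga] [b Gb]] nd; split; [|split; [|split]].
- by move=> P; apply: first_edge_no_crit nd (in_Gamma_u_axis Gb).
- by move=> P; apply: last_edge_no_crit nd (in_Gamma_v_axis Ga).
- by move=> P [pP _]; apply: nd.
- by move=> w; apply: nonextreme_vertex_no_crit.
Qed.
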